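(* For every integer $N\ge5$, \[ h(N)>\left\lfloor\frac{\lfloor\sqrt{N}\rfloor+1}{2}\right\rfloor. \]
   Context: A finite set $A\subseteq\mathbb{Z}$ is Sidon if $a+b=c+d$ with $a,b,c,d\in A$ implies $\{a,b\}=\{c,d\}$ as unordered pairs. For a natural number $N$, $h(N)=\max\{|A| : A\subseteq\{1,\dots,N\},\ A\text{ Sidon}\}$. *)

From mathcomp Require Import all_boot.
From Stdlib Require PeanoNat.
Set Implicit Arguments. Unset Strict Implicit. Unset Printing Implicit Defensive.

(* Subsets of {1,...,N} are represented as sets A : {set 'I_N.+1} with 0 \notin A. *)

Definition sidonb (N : nat) (A : {set 'I_N.+1}) : bool :=
  [forall a in A, forall b in A, forall c in A, forall d in A,
     ((a : nat) + b == (c : nat) + d) ==>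
     (((a == c) && (b == d)) || ((a == d) && (b == c)))].

Definition h (N : nat) : nat :=
  \max_(A : {set 'I_N.+1} | (ord0 \notin A) && sidonb A) #|A|.

From mathcomp Require Import all_boot.
From Stdlib Require PeanoNat.
From mathcomp Require Import all_algebra all_solvable all_field zify ring.
Set Implicit Arguments. Unset Strict Implicit. Unset Printing Implicit Defensive.
Import GRing.Theory.

(* Bose-Chowla: in a field L of order q^2 with primitive root g, the exponents
   i with g^i - g in the subfield GF(q) form a Sidon set modulo q^2 - 1 of
   size q, because (g + a)(g + b) determines a + b and a b when a, b lie in
   GF(q) and g does not.  Take s = (sqrt N + 1) / 2 and q the power of 2 with
   s < q <= 2 s.  As q (s q + 1) > s (q^2 - 1), averaging over translates
   shows that some translate of this set meets the window [0, W), W = s q + 1,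
   in more than s points.  Moved into {1, ..., W}, and W <= 2 s^2 + 1 <= N,
   these points form a Sidon set, since integers with equal sums have equal
   sums mod q^2 - 1. *)

Definition sidon_mod n (S : {set 'I_n.+1}) := forall a b c d : 'I_n.+1,
  a \in S -> b \in S -> c \in S -> d \in S ->
  a + b = c + d %[mod n.+1] -> (a = c /\ b = d) \/ (a = d /\ b = c).

Lemma leq_card_h N (A : {set 'I_N.+1}) :
  ord0 \notin A -> sidonb A -> #|A| <= h N.
Proof. by move=> A0 A_sidon; apply: leq_bigmax_cond; rewrite A0. Qed.

Definition window n (S : {set 'I_n.+1}) (t : 'I_n.+1) W : {set 'I_n.+1} :=
  [set i in S | val (i + t)%R < W].

Lemma sum_ord_ltn n W : \sum_(i < n) (i < W : nat) = minn W n.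
Proof.
elim: n => [|n IHn]; first by rewrite big_ord0 minn0.
by rewrite big_ord_recr /= IHn; case: (ltnP n W); lia.
Qed.

Lemma sum_card_window n W (S : {set 'I_n.+1}) :
  W <= n.+1 -> \sum_(t : 'I_n.+1) #|window S t W| = #|S| * W.
Proof.
move=> W_le.
transitivity (\sum_(i in S) \sum_(t : 'I_n.+1) (val (i + t)%R < W : nat)).
  rewrite exchange_big; apply: eq_bigr => t _.
  rewrite -sum1_card big_mkcond [RHS]big_mkcond; apply: eq_bigr => i _.
  by rewrite inE; case: (_ \in _).
rewrite -sum1_card big_distrl; apply: eq_bigr => i _.
rewrite (reindex_inj (addrI (- i)%R)).
under eq_bigr => t _ do rewrite addNKr.
by rewrite sum_ord_ltn (minn_idPl W_le); exact/esym/mul1n.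
Qed.

Lemma exists_window_gt n s W (S : {set 'I_n.+1}) :
  W <= n.+1 -> s * n.+1 < #|S| * W -> exists t, s < #|window S t W|.
Proof.
move=> W_le; rewrite -sum_card_window // => lt_sum.
apply/existsP; apply: contraLR lt_sum; rewrite negb_exists -leqNgt => /forallP le_s.
rewrite mulnC -[X in X * s](card_ord n.+1) -sum_nat_const.
by apply: leq_sum => t _; rewrite leqNgt le_s.
Qed.

Lemma eq_mod_of_translate n (a b c d t : 'I_n.+1) :
  val (a + t)%R + val (b + t)%R = val (c + t)%R + val (d + t)%R ->
  a + b = c + d %[mod n.+1].
Proof.
move=> /= /(congr1 (modn^~ n.+1)); rewrite !modnDm.
by rewrite (addnACA a) (addnACA c) => /eqP; rewrite eqn_modDr => /eqP.
Qed.

Lemma card_window_le_h n N W (S : {set 'I_n.+1}) t :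
  sidon_mod S -> W <= N -> #|window S t W| <= h N.
Proof.
move=> S_sidon W_le.
pose f (i : 'I_n.+1) : 'I_N.+1 := inord (val (i + t)%R).+1.
have fE : {in window S t W, forall i, val (f i) = (val (i + t)%R).+1}.
  by move=> i; rewrite inE => /andP[_ lt_W]; rewrite /f /= inordK //; move: lt_W => /=; lia.
have f_inj : {in window S t W &, injective f}.
  move=> i j wi wj /(congr1 val); rewrite !fE // => -[E].
  by apply: (addIr t); apply: val_inj.
rewrite -(card_in_imset f_inj); apply: leq_card_h.
  by apply/imsetP => -[i wi /(congr1 val)]; rewrite fE.
apply/forall_inP => _ /imsetP[a wa ->]; apply/forall_inP => _ /imsetP[b wb ->].
apply/forall_inP => _ /imsetP[c wc ->]; apply/forall_inP => _ /imsetP[d wd ->].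
apply/implyP; rewrite !fE // => /eqP sum_eq.
have sum_mod : a + b = c + d %[mod n.+1] by apply: (eq_mod_of_translate (t := t)); lia.
move: wa wb wc wd; rewrite !inE => /andP[Sa _] /andP[Sb _] /andP[Sc _] /andP[Sd _].
by case: (S_sidon a b c d Sa Sb Sc Sd sum_mod) => -[-> ->]; rewrite !eqxx ?orbT.
Qed.

Local Open Scope ring_scope.

Lemma prim_expr_ord_inj (R : idomainType) n (z : R) :
  n.-primitive_root z -> injective (fun i : 'I_n => z ^+ i).
Proof.
move=> z_prim i j /eqP; rewrite (eq_prim_root_expr z_prim) !modn_small //.
by move/eqP/val_inj.
Qed.

Section FinFieldPrimRoot.

Variables (F : finFieldType) (n : nat).
Hypothesis cardF : #|F| = n.+2.

Lemma finField_prim_root : exists g : F, n.+1.-primitive_root g.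
Proof.
have : has n.+1.-primitive_root (enum (predC1 (0 : F))).
  apply: has_prim_root => //; last by rewrite -cardE cardC1 cardF.
    apply/allP => x; rewrite mem_enum /= => x_neq0.
    rewrite unity_rootE; apply/eqP; apply: (mulfI x_neq0).
    by rewrite -exprS -cardF expf_card mulr1.
  exact: enum_uniq.
by case/hasP => g _ g_prim; exists g.
Qed.

Variable g : F.
Hypothesis g_prim : n.+1.-primitive_root g.

Lemma prim_root_log x : x != 0 -> exists i : 'I_n.+1, g ^+ i = x.
Proof.
move=> x_neq0.
have g_neq0 : g != 0 by rewrite (prim_root_eq0 g_prim).
have powers_sub : [set g ^+ i | i : 'I_n.+1] \subset predC1 0.
  by apply/subsetP => _ /imsetP[i _ ->]; rewrite !inE expf_neq0.
have card_powers : #|[set g ^+ i | i : 'I_n.+1]| = #|predC1 (0 : F)|.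
  by rewrite card_imset ?card_ord ?cardC1 ?cardF //; apply: prim_expr_ord_inj.
have := subset_cardP card_powers powers_sub x; rewrite !inE x_neq0.
by case/imsetP => i _ ->; exists i.
Qed.

End FinFieldPrimRoot.

Lemma eq_pair_sum_prod (R : idomainType) (a b c d : R) :
  a + b = c + d -> a * b = c * d -> (a = c /\ b = d) \/ (a = d /\ b = c).
Proof.
move=> sum_eq prod_eq.
have : (c - a) * (c - b) = 0.
  transitivity (c * c - (a + b) * c + a * b); first ring.
  by rewrite sum_eq prod_eq; ring.
move/eqP; rewrite mulf_eq0 !subr_eq0 => /orP[/eqP ca | /eqP cb].
  by left; split=> //; apply: (addrI a); rewrite sum_eq ca.
by right; split=> //; apply: (addIr b); rewrite sum_eq cb addrC.
Qed.

(* Compare coefficients in g^2 + (a + b) g + a b: 1 and g are free over K. *)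
Lemma eq_sum_prod_of_shift_mul (F : fieldType) (K : {pred F}) (g a b c d : F) :
  GRing.subr_2closed K -> GRing.mulr_2closed K -> GRing.divr_2closed K -> g \notin K ->
  a \in K -> b \in K -> c \in K -> d \in K ->
  (g + a) * (g + b) = (g + c) * (g + d) -> a + b = c + d /\ a * b = c * d.
Proof.
move=> Ksub Kmul Kdiv gK Ka Kb Kc Kd prod_eq.
have lin : g * ((a - c) - (d - b)) = c * d - a * b.
  apply/eqP; rewrite -subr_eq0 -(subrr ((g + c) * (g + d))) -{1}prod_eq.
  by apply/eqP; ring.
have [sum0 | sum_neq0] := eqVneq ((a - c) - (d - b)) 0.
  split; first by apply/eqP; rewrite -subr_eq0; apply/eqP; rewrite -sum0; ring.
  by apply/eqP; rewrite eq_sym -subr_eq0 -lin sum0 mulr0.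
case/negP: gK; rewrite (_ : g = (c * d - a * b) / ((a - c) - (d - b))).
  by apply: (Kdiv); apply: (Ksub); first [apply: (Kmul) | apply: (Ksub)].
by rewrite -lin mulfK.
Qed.

Definition fixed_pow (R : pzRingType) (q : nat) : {pred R} := [pred x | x ^+ q == x].

Section BoseChowla.

Variables (L : finFieldType) (q n : nat).
Hypotheses (q_pchar : [pchar L].-nat q) (cardL : #|L| = n.+2) (n_q : n.+2 = (q * q)%N).
Variable g : L.
Hypothesis g_prim : n.+1.-primitive_root g.

Local Notation K := (@fixed_pow L q).

Lemma fixed_powN x : x \in K -> - x \in K.
Proof. by rewrite !inE exprNn_pchar // => /eqP->. Qed.

Lemma fixed_pow_subr : GRing.subr_2closed K.
Proof. by move=> x y Kx /fixed_powN; rewrite !inE exprDn_pchar // (eqP Kx) => /eqP->. Qed.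

Lemma fixed_pow_mulr : GRing.mulr_2closed K.
Proof. by move=> x y; rewrite !inE exprMn => /eqP-> /eqP->. Qed.

Lemma fixed_pow_divr : GRing.divr_2closed K.
Proof. by move=> x y; rewrite !inE exprMn exprVn => /eqP-> /eqP->. Qed.

Let q_gt1 : (1 < q)%N.
Proof. by have := card_finNzRing_gt1 L; rewrite cardL n_q; nia. Qed.

Lemma prim_root_notin_fixed_pow : g \notin K.
Proof.
have gt1 := q_gt1; rewrite inE -{2}(expr1 g) (eq_prim_root_expr g_prim).
rewrite !modn_small; [by apply/eqP => q1; rewrite q1 in gt1 | nia | nia].
Qed.

Definition bose_chowla_set : {set 'I_n.+1} := [set i : 'I_n.+1 | g ^+ i - g \in K].

Lemma bose_chowla_sidon : sidon_mod bose_chowla_set.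
Proof.
move=> a b c d; rewrite !inE => Ka Kb Kc Kd /eqP sum_mod.
have shift (i : 'I_n.+1) : g ^+ i = g + (g ^+ i - g) by rewrite addrC subrK.
have prod_eq : (g + (g ^+ a - g)) * (g + (g ^+ b - g))
              = (g + (g ^+ c - g)) * (g + (g ^+ d - g)).
  by rewrite -!shift -!exprD; apply/eqP; rewrite (eq_prim_root_expr g_prim).
have [sum_eq mul_eq] := eq_sum_prod_of_shift_mul fixed_pow_subr fixed_pow_mulr
  fixed_pow_divr prim_root_notin_fixed_pow Ka Kb Kc Kd prod_eq.
have expr_inj := prim_expr_ord_inj g_prim.
by case: (eq_pair_sum_prod sum_eq mul_eq) => -[/addIr ac /addIr bd];
  [left | right]; split; apply: expr_inj.
Qed.

Lemma card_bose_chowla_set : #|bose_chowla_set| = #|K|.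
Proof.
have shift_inj : {in bose_chowla_set &, injective (fun i : 'I_n.+1 => g ^+ i - g)}.
  by move=> i j _ _ /addIr /(prim_expr_ord_inj g_prim).
rewrite -(card_in_imset shift_inj); apply: eq_card => x.
apply/imsetP/idP => [[i] | Kx]; first by rewrite inE => Ki ->.
have gx_neq0 : g + x != 0.
  apply: contraNneq prim_root_notin_fixed_pow => /eqP; rewrite addr_eq0 => /eqP ->.
  exact: fixed_powN.
have [i gi] := prim_root_log cardL g_prim gx_neq0.
by exists i; rewrite ?inE gi addrC addKr.
Qed.

(* The q solutions 0 and g ^+ ((q + 1) k), k < q - 1, of x ^+ q = x:
   (q + 1) q = q + 1 modulo q^2 - 1. *)
Lemma card_fixed_pow : (q <= #|K|)%N.
Proof.
have gt1 := q_gt1.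
have g_neq0 : g != 0 by rewrite (prim_root_eq0 g_prim).
pose T := 0 |: [set g ^+ ((q + 1) * k) | k : 'I_q.-1].
have card_T : #|T| = q.
  rewrite cardsU1 card_imset ?card_ord.
    have /negPf-> : 0 \notin [set g ^+ ((q + 1) * k) | k : 'I_q.-1].
      by apply/imsetP => -[k _ /esym/eqP]; rewrite expf_eq0 (negPf g_neq0) andbF.
    by rewrite add1n prednK // ltnW.
  move=> i j /eqP; rewrite (eq_prim_root_expr g_prim) !modn_small.
  - by rewrite eqn_pmul2l ?addn1 // => /eqP /val_inj.
  - by have := ltn_ord j; nia.
  - by have := ltn_ord i; nia.
rewrite -[X in (X <= _)%N]card_T; apply/subset_leq_card/subsetP => x.
rewrite !inE => /predU1P[-> | /imsetP[k _ ->]]; first by rewrite expr0n gtn_eqF // ltnW.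
rewrite -exprM (eq_prim_root_expr g_prim).
have -> : ((q + 1) * k * q = (q + 1) * k + n.+1 * k)%N by nia.
by rewrite addnC mulnC modnMDl.
Qed.

End BoseChowla.

Local Close Scope ring_scope.

Lemma bose_chowla p j : prime p -> 0 < j ->
  exists n (S : {set 'I_n.+1}), [/\ n.+2 = p ^ j * p ^ j, sidon_mod S & p ^ j <= #|S|].
Proof.
move=> p_pr j_gt0.
have [L p_char cardL] := pPrimePowerField p_pr (leq_trans j_gt0 (leq_addr j j)).
have q_gt1 : 1 < p ^ j by rewrite -{1}(expn0 p) ltn_exp2l ?prime_gt1.
pose n := (p ^ j * p ^ j).-2.
have n_q : n.+2 = p ^ j * p ^ j by rewrite /n; nia.
have cardL_n : #|L| = n.+2 by rewrite cardL n_q expnD.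
have q_pchar : [pchar L]%R.-nat (p ^ j).
  by rewrite pnatX (eq_pnat _ (pcharf_eq p_char)) pnat_id.
have [g g_prim] := finField_prim_root cardL_n.
exists n, (bose_chowla_set (p ^ j) n g); split=> //.
  exact: (bose_chowla_sidon q_pchar cardL_n n_q g_prim).
rewrite (card_bose_chowla_set q_pchar cardL_n n_q g_prim).
exact: (card_fixed_pow q_pchar cardL_n n_q g_prim).
Qed.

Theorem mainTheorem11 (N : nat) : 5 <= N ->
  (PeanoNat.Nat.sqrt N).+1 %/ 2 < h N.
Proof.
move=> N_ge5.
have [sqrt_le lt_sqrt] := PeanoNat.Nat.sqrt_spec' N.
set r := PeanoNat.Nat.sqrt N in sqrt_le lt_sqrt *.
set s := r.+1 %/ 2.
have r_ge2 : 2 <= r by nia.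
have [s_gt0 r_le s_le] : [/\ 0 < s, r <= 2 * s & 2 * s <= r.+1] by rewrite /s; split; lia.
pose j := (trunc_log 2 s).+1.
have s_lt_q : s < 2 ^ j by apply: trunc_log_ltn.
have q_le : 2 ^ j <= 2 * s by rewrite expnS leq_mul2l /=; apply: trunc_logP.
have [n [S [n_q S_sidon S_card]]] := @bose_chowla 2 j isT (ltn0Sn _).
set q := 2 ^ j in s_lt_q q_le n_q S_card.
have W_le_N : s * q + 1 <= N.
  by have [s_lt2 | s_ge2] := ltnP s 2; nia.
have [t rich] : exists t, s < #|window S t (s * q + 1)|.
  by apply: exists_window_gt; nia.
exact: leq_trans rich (card_window_le_h t S_sidon W_le_N).
Qed.
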